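(* Let $H\subseteq G$ be simple groups, and assume $G$ is co-hopfian. Then the inclusion $H\subseteq G$ is a localization if and only if the following three conditions hold: (1) there is an injective homomorphism $j\colon\mathrm{Aut}(H)\to\mathrm{Aut}(G)$ with $j(c_h)=c_h^{G}$ for all $h\in H$; (2) for every subgroup $K\subseteq G$ isomorphic to $H$ there is $\beta\in\mathrm{Aut}(G)$ with $\beta(K)=H$; (3) the only automorphism of $G$ whose restriction to $H$ is the identity of $H$ is $\mathrm{id}_G$ (i.e. the centralizer of $H$ in $\mathrm{Aut}(G)$ is trivial).
   Context: A group homomorphism $i\colon H\to G$ is a localization if for every homomorphism $\varphi\colon H\to G$ there exists a unique homomorphism $\psi\colon G\to G$ with $\psi\circ i=\varphi$; for $H\subseteq G$, ''$H\subseteq G$ is a localization'' means the inclusion map is a localization. A group is co-hopfian if every injective endomorphism of it is an automorphism. For a group $X$ and $x\in X$, $c_x$ denotes the inner automorphism $y\mapsto x^{-1}yx$ of $X$. For $H\subseteq G$ and $h\in H$, $c_h$ denotes conjugation by $h$ on $H$ and $c_h^{G}$ denotes conjugation by $h$ on $G$. *)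

From Stdlib Require Import Classical FunctionalExtensionality.

Record group := Group {
  carrier :> Type;
  gmul : carrier -> carrier -> carrier;
  gone : carrier;
  ginv : carrier -> carrier;
  gmulA : forall x y z, gmul x (gmul y z) = gmul (gmul x y) z;
  gmul1x : forall x, gmul gone x = x;
  gmulx1 : forall x, gmul x gone = x;
  gmulVx : forall x, gmul (ginv x) x = gone;
  gmulxV : forall x, gmul x (ginv x) = gone
}.

Arguments gmul {g}.
Arguments gone {g}.
Arguments ginv {g}.

Definition is_hom {G H : group} (f : G -> H) : Prop :=
  forall x y : G, f (gmul x y) = gmul (f x) (f y).

Definition injective {A B : Type} (f : A -> B) : Prop :=
  forall x y, f x = f y -> x = y.

Definition surjective {A B : Type} (f : A -> B) : Prop :=
  forall y, exists x, f x = y.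

Definition is_aut {G : group} (f : G -> G) : Prop :=
  is_hom f /\ injective f /\ surjective f.

Definition is_subgroup {G : group} (K : G -> Prop) : Prop :=
  K gone /\ (forall x y, K x -> K y -> K (gmul x y)) /\ (forall x, K x -> K (ginv x)).

Definition is_normal {G : group} (N : G -> Prop) : Prop :=
  is_subgroup N /\ forall x g : G, N x -> N (gmul (ginv g) (gmul x g)).

Definition simple (G : group) : Prop :=
  (exists x : G, x <> gone) /\
  forall N : G -> Prop, is_normal N ->
    (forall x, N x -> x = gone) \/ (forall x, N x).

Definition cohopfian (G : group) : Prop :=
  forall f : G -> G, is_hom f -> injective f -> is_aut f.

Definition conj {G : group} (x : G) : G -> G := fun y => gmul (ginv x) (gmul y x).

Definition localization {H G : group} (i : H -> G) : Prop :=
  forall phi : H -> G, is_hom phi ->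
    exists psi : G -> G, is_hom psi /\ (forall h, psi (i h) = phi h) /\
      forall psi' : G -> G, is_hom psi' -> (forall h, psi' (i h) = phi h) -> psi' = psi.

Definition image_pred {G : group} (b : G -> G) (K : G -> Prop) : G -> Prop :=
  fun y => exists x, K x /\ b x = y.
Definition range {A B : Type} (f : A -> B) : B -> Prop :=
  fun y => exists x, f x = y.

From Stdlib Require Import Classical ClassicalEpsilon FunctionalExtensionality.

(* A homomorphism out of the simple group H is trivial or injective, and since G is
   simple and co-hopfian, every endomorphism of G extending an injective one is an
   automorphism.  For a localization, [j a] is the extension of [i \o a]; (2) comes from
   inverting the extension of an embedding [H -> K], and (3) from uniqueness of the
   extension of [i].

   Conversely, (3) gives uniqueness, since two extensions of an injective [phi] differ by
   an automorphism fixing H.  For existence, (2) gives [beta] with [beta \o phi = i \o a]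
   for some [a] in Aut(H).  From (1) and [a \o c_h = c_(a h) \o a] one gets
   [j a \o c_(i h) = c_(i (a h)) \o j a], so [j a (i h)] and [i (a h)] induce the same
   inner automorphism; the center of G being trivial, [j a \o i = i \o a] and
   [beta^-1 \o j a] extends [phi].  If instead G is abelian, H is normal, hence all of G. *)

Section GroupFacts.
Variable G : group.
Implicit Types a x y : G.

Lemma mulKg a x : gmul (ginv a) (gmul a x) = x.
Proof. rewrite gmulA, gmulVx, gmul1x; reflexivity. Qed.

Lemma mulKVg a x : gmul a (gmul (ginv a) x) = x.
Proof. rewrite gmulA, gmulxV, gmul1x; reflexivity. Qed.

Lemma mulgK a x : gmul (gmul x a) (ginv a) = x.
Proof. rewrite <- gmulA, gmulxV, gmulx1; reflexivity. Qed.

Lemma mulgKV a x : gmul (gmul x (ginv a)) a = x.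
Proof. rewrite <- gmulA, gmulVx, gmulx1; reflexivity. Qed.

Lemma mulgI a x y : gmul a x = gmul a y -> x = y.
Proof. intro E; rewrite <- (mulKg a x), <- (mulKg a y), E; reflexivity. Qed.

Lemma mulIg a x y : gmul x a = gmul y a -> x = y.
Proof. intro E; rewrite <- (mulgK a x), <- (mulgK a y), E; reflexivity. Qed.

Lemma invg_of_mul1 x y : gmul x y = gone -> y = ginv x.
Proof. intro E; apply (mulgI x); rewrite gmulxV; exact E. Qed.

Lemma invg1 : ginv (@gone G) = gone.
Proof. symmetry; apply invg_of_mul1, gmul1x. Qed.

Lemma eq_of_mulV1 x y : gmul x (ginv y) = gone -> x = y.
Proof. intro E; rewrite <- (mulgKV y x), E, gmul1x; reflexivity. Qed.

Lemma conj_aut x : is_aut (conj x).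
Proof.
  unfold conj; split; [| split].
  - intros a b; rewrite <- !gmulA, mulKVg; reflexivity.
  - intros a b E; apply (mulIg x), (mulgI (ginv x)); exact E.
  - intro y; exists (gmul x (gmul y (ginv x))).
    rewrite <- !gmulA, mulKg, gmulVx, gmulx1; reflexivity.
Qed.

Definition center : G -> Prop := fun z => forall g, gmul z g = gmul g z.

Lemma center_normal : is_normal center.
Proof.
  split; [split; [| split] |]; unfold center.
  - intro g; rewrite gmul1x, gmulx1; reflexivity.
  - intros x y Zx Zy g; rewrite <- gmulA, Zy, gmulA, Zx, gmulA; reflexivity.
  - intros x Zx g; apply (mulgI x); rewrite mulKVg, gmulA, Zx, mulgK; reflexivity.
  - intros x g Zx h; rewrite (Zx g), mulKg; apply Zx.
Qed.

(* [c_u = c_v] means exactly that [v u^-1] is central. *)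
Lemma conj_inj_of_center_trivial (u v : G) :
  (forall z, center z -> z = gone) ->
  (forall y, conj u y = conj v y) -> u = v.
Proof.
  intros Z E; symmetry; apply eq_of_mulV1, Z; intro y.
  specialize (E y); unfold conj in E.
  apply (f_equal (fun t => gmul v (gmul t (ginv u)))) in E.
  rewrite <- !gmulA in E; rewrite mulKVg, gmulxV, gmulx1 in E.
  rewrite <- !gmulA; exact E.
Qed.

Lemma aut_inv (f : G -> G) : is_aut f ->
  exists g, is_aut g /\ (forall x, g (f x) = x) /\ (forall y, f (g y) = y).
Proof.
  intros [Hf [If Sf]]; destruct (choice _ Sf) as [g fK].
  assert (gK : forall x, g (f x) = x) by (intro x; apply If; rewrite fK; reflexivity).
  exists g; split; [split; [| split] | split]; auto.
  - intros a b; apply If; rewrite Hf, !fK; reflexivity.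
  - intros a b E; rewrite <- (fK a), <- (fK b), E; reflexivity.
  - intro x; exists (f x); apply gK.
Qed.

End GroupFacts.

Arguments center {G}.

Section Homomorphisms.
Variables G K : group.
Variable f : G -> K.
Hypothesis f_hom : is_hom f.

Lemma hom_one : f gone = gone.
Proof. apply (mulgI K (f gone)); rewrite <- f_hom, gmul1x, gmulx1; reflexivity. Qed.

Lemma hom_inv x : f (ginv x) = ginv (f x).
Proof. apply invg_of_mul1; rewrite <- f_hom, gmulxV; exact hom_one. Qed.

Lemma hom_conj x y : f (conj x y) = conj (f x) (f y).
Proof. unfold conj; rewrite !f_hom, hom_inv; reflexivity. Qed.

Lemma ker_normal : is_normal (fun x => f x = gone).
Proof.
  split; [split; [| split] |].
  - exact hom_one.
  - intros x y Ex Ey; rewrite f_hom, Ex, Ey, gmul1x; reflexivity.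
  - intros x Ex; rewrite hom_inv, Ex, invg1; reflexivity.
  - intros x g Ex; rewrite f_hom, f_hom, Ex, gmul1x, <- f_hom, gmulVx; exact hom_one.
Qed.

Lemma simple_hom_inj_or_trivial :
  simple G -> injective f \/ (forall x, f x = gone).
Proof.
  intros [_ sG]; destruct (sG _ ker_normal) as [T | A]; [left | right; exact A].
  intros x y E; apply eq_of_mulV1, T; rewrite f_hom, hom_inv, E, gmulxV; reflexivity.
Qed.

Lemma range_subgroup : is_subgroup (range f).
Proof.
  split; [| split].
  - exists gone; exact hom_one.
  - intros x y [a <-] [b <-]; exists (gmul a b); apply f_hom.
  - intros x [a <-]; exists (ginv a); apply hom_inv.
Qed.

End Homomorphisms.

Arguments hom_one {G K f}.
Arguments hom_inv {G K f}.
Arguments hom_conj {G K f}.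

Lemma hom_comp {G K L : group} (f : G -> K) (g : K -> L) :
  is_hom f -> is_hom g -> is_hom (fun x => g (f x)).
Proof. intros Hf Hg x y; rewrite Hf, Hg; reflexivity. Qed.

Lemma aut_comp {G : group} (f g : G -> G) :
  is_aut f -> is_aut g -> is_aut (fun x => g (f x)).
Proof.
  intros [Hf [If Sf]] [Hg [Ig Sg]]; split; [apply hom_comp; auto | split].
  - intros x y E; apply If, Ig, E.
  - intro z; destruct (Sg z) as [y <-], (Sf y) as [x <-]; exists x; reflexivity.
Qed.

Lemma ext_of_surjective {H G : group} (i : H -> G) (phi : H -> G) :
  is_hom i -> injective i -> surjective i -> is_hom phi ->
  exists psi : G -> G, is_hom psi /\ forall h, psi (i h) = phi h.
Proof.
  intros i_hom i_inj i_surj phi_hom; destruct (choice _ i_surj) as [r iK].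
  assert (rK : forall h, r (i h) = h) by (intro h; apply i_inj, iK).
  exists (fun y => phi (r y)); split; [| intro h; rewrite rK; reflexivity].
  intros x y; rewrite <- phi_hom; f_equal; apply i_inj.
  rewrite i_hom, !iK; reflexivity.
Qed.

Definition aut_embedding {H G : group} (i : H -> G) : Prop :=
  exists j : (H -> H) -> (G -> G),
    (forall a, is_aut a -> is_aut (j a)) /\
    (forall a b, is_aut a -> is_aut b ->
       j (fun x => a (b x)) = (fun y => j a (j b y))) /\
    (forall a b, is_aut a -> is_aut b -> j a = j b -> a = b) /\
    (forall h : H, j (conj h) = conj (i h)).

Definition iso_subgroups_conjugate {H G : group} (i : H -> G) : Prop :=
  forall K : G -> Prop, is_subgroup K ->
    (exists f : H -> G, is_hom f /\ injective f /\ (forall y, K y <-> range f y)) ->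
    exists beta : G -> G, is_aut beta /\
      (forall y, image_pred beta K y <-> range i y).

Definition aut_centralizer_trivial {H G : group} (i : H -> G) : Prop :=
  forall beta : G -> G, is_aut beta -> (forall h, beta (i h) = i h) ->
    forall x, beta x = x.

Section Localization.
Variables H G : group.
Variable i : H -> G.
Hypotheses (i_hom : is_hom i) (i_inj : injective i).
Hypotheses (simpleH : simple H) (simpleG : simple G) (coG : cohopfian G).

Lemma ext_aut (phi : H -> G) (psi : G -> G) :
  injective phi -> is_hom psi -> (forall h, psi (i h) = phi h) -> is_aut psi.
Proof.
  intros phi_inj psi_hom E.
  destruct (simple_hom_inj_or_trivial G G psi psi_hom simpleG) as [I | T].
  - apply coG; assumption.
  - exfalso; destruct simpleH as [[x Hx] _]; apply Hx, phi_inj.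
    rewrite <- !E, !T; reflexivity.
Qed.

Lemma hom_trivial_of_trivial_on_image (p : G -> G) :
  is_hom p -> (forall h, p (i h) = gone) -> forall x, p x = gone.
Proof.
  intros p_hom E.
  destruct (simple_hom_inj_or_trivial G G p p_hom simpleG) as [I | T]; [| exact T].
  exfalso; destruct simpleH as [[h Hh] _]; apply Hh, i_inj, I.
  rewrite E, (hom_one i_hom), (hom_one p_hom); reflexivity.
Qed.

Lemma simple_abelian_surjective : (forall z : G, center z) -> surjective i.
Proof.
  intro Z.
  assert (N : is_normal (range i)).
  { split; [exact (range_subgroup H G i i_hom) |].
    intros x g Rx; rewrite (Z x g), mulKg; exact Rx. }
  destruct (proj2 simpleG _ N) as [T | A]; [exfalso | exact A].
  destruct simpleH as [[h Hh] _]; apply Hh, i_inj.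
  rewrite (hom_one i_hom); apply T; exists h; reflexivity.
Qed.

Lemma localization_ext_op : localization i ->
  exists E : (H -> G) -> (G -> G), forall phi, is_hom phi ->
    is_hom (E phi) /\ forall h, E phi (i h) = phi h.
Proof.
  intro L; apply (choice (fun phi psi =>
    is_hom phi -> is_hom psi /\ forall h, psi (i h) = phi h)).
  intro phi; destruct (classic (is_hom phi)) as [Hphi | nHphi].
  - destruct (L phi Hphi) as [psi [Hpsi [Epsi _]]]; exists psi; auto.
  - exists (fun y => y); contradiction.
Qed.

Lemma localization_ext_unique (phi : H -> G) (p1 p2 : G -> G) :
  localization i -> is_hom phi -> is_hom p1 -> is_hom p2 ->
  (forall h, p1 (i h) = phi h) -> (forall h, p2 (i h) = phi h) -> p1 = p2.
Proof.
  intros L Hphi H1 H2 E1 E2; destruct (L phi Hphi) as [psi [_ [_ U]]].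
  rewrite (U p1), (U p2); auto.
Qed.

Lemma localization_aut_embedding : localization i -> aut_embedding i.
Proof.
  intro L; destruct (localization_ext_op L) as [E HE].
  assert (HEa : forall a, is_aut a ->
            is_hom (E (fun h => i (a h))) /\ forall h, E (fun h => i (a h)) (i h) = i (a h)).
  { intros a [Ha _]; apply HE, hom_comp; assumption. }
  exists (fun a => E (fun h => i (a h))); split; [| split; [| split]].
  - intros a Aa; destruct (HEa a Aa) as [Ha Ea].
    apply (ext_aut (fun h => i (a h))); [| exact Ha | exact Ea].
    intros x y Exy; apply (proj1 (proj2 Aa)), i_inj, Exy.
  - intros a b Aa Ab.
    destruct (HEa a Aa) as [Ha Ea], (HEa b Ab) as [Hb Eb], (HEa _ (aut_comp b a Ab Aa)) as [Hab Eab].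
    apply (localization_ext_unique (fun h => i (a (b h)))); [exact L | | exact Hab | | exact Eab |].
    + exact (hom_comp _ i (proj1 (aut_comp b a Ab Aa)) i_hom).
    + exact (hom_comp _ _ Hb Ha).
    + intro h; rewrite Eb, Ea; reflexivity.
  - intros a b Aa Ab Eab; extensionality x; apply i_inj.
    rewrite <- (proj2 (HEa a Aa)), <- (proj2 (HEa b Ab)), Eab; reflexivity.
  - intro h; destruct (HEa _ (conj_aut H h)) as [Hc Ec].
    apply (localization_ext_unique (fun x => i (conj h x))); [exact L | | exact Hc | | exact Ec |].
    + exact (hom_comp _ i (proj1 (conj_aut H h)) i_hom).
    + exact (proj1 (conj_aut G (i h))).
    + intro x; rewrite (hom_conj i_hom); reflexivity.
Qed.

Lemma localization_iso_subgroups_conjugate : localization i -> iso_subgroups_conjugate i.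
Proof.
  intros L K _ [f [Hf [If Kf]]].
  destruct (localization_ext_op L) as [E HE]; destruct (HE f Hf) as [HEf Ef].
  destruct (aut_inv G _ (ext_aut f (E f) If HEf Ef)) as [beta [Abeta [betaK _]]].
  exists beta; split; [exact Abeta |]; intro y; split.
  - intros [x [Kx <-]]; apply Kf in Kx; destruct Kx as [h <-].
    exists h; rewrite <- Ef, betaK; reflexivity.
  - intros [h <-]; exists (f h); split.
    + apply Kf; exists h; reflexivity.
    + rewrite <- Ef, betaK; reflexivity.
Qed.

Lemma localization_aut_centralizer_trivial : localization i -> aut_centralizer_trivial i.
Proof.
  intros L beta [Hbeta _] Fix x.
  replace beta with (fun y : G => y); [reflexivity |].
  apply (localization_ext_unique i); auto; intros a b; reflexivity.
Qed.

Lemma ext_unique_of_aut_centralizer_trivial (phi : H -> G) (p1 p2 : G -> G) :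
  aut_centralizer_trivial i -> is_hom phi -> is_hom p1 -> is_hom p2 ->
  (forall h, p1 (i h) = phi h) -> (forall h, p2 (i h) = phi h) -> p1 = p2.
Proof.
  intros C Hphi H1 H2 E1 E2; extensionality x.
  destruct (simple_hom_inj_or_trivial H G phi Hphi simpleH) as [Iphi | Tphi].
  - destruct (aut_inv G _ (ext_aut phi p2 Iphi H2 E2)) as [g [Ag [gK Kg]]].
    assert (Fix : forall y, g (p1 y) = y).
    { apply C; [exact (aut_comp p1 g (ext_aut phi p1 Iphi H1 E1) Ag) |].
      intro h; rewrite E1, <- E2; apply gK. }
    rewrite <- (Fix x) at 2; rewrite Kg; reflexivity.
  - assert (T : forall p, is_hom p -> (forall h, p (i h) = phi h) -> p x = gone).
    { intros p Hp Ep; apply hom_trivial_of_trivial_on_image; auto.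
      intro h; rewrite Ep; apply Tphi. }
    rewrite (T p1), (T p2); auto.
Qed.

Lemma aut_transport (phi : H -> G) (beta : G -> G) :
  is_hom phi -> injective phi -> is_aut beta ->
  (forall y, image_pred beta (range phi) y <-> range i y) ->
  exists a, is_aut a /\ forall h, i (a h) = beta (phi h).
Proof.
  intros Hphi Iphi [Hbeta [Ibeta _]] Ebeta.
  destruct (choice (fun h h' => i h' = beta (phi h))) as [a Ea].
  { intro h; apply (Ebeta (beta (phi h))); exists (phi h); split; [exists h |]; reflexivity. }
  exists a; split; [split; [| split] | exact Ea].
  - intros x y; apply i_inj; rewrite i_hom, !Ea, Hphi, Hbeta; reflexivity.
  - intros x y Exy; apply Iphi, Ibeta; rewrite <- !Ea, Exy; reflexivity.
  - intro h'; destruct (proj2 (Ebeta (i h')) (ex_intro _ h' eq_refl)) as [y [[h <-] E]].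
    exists h; apply i_inj; rewrite Ea; exact E.
Qed.

Lemma aut_embedding_intertwines (j : (H -> H) -> (G -> G)) :
  (forall a, is_aut a -> is_aut (j a)) ->
  (forall a b, is_aut a -> is_aut b -> j (fun x => a (b x)) = (fun y => j a (j b y))) ->
  (forall h, j (conj h) = conj (i h)) ->
  (forall z : G, center z -> z = gone) ->
  forall a, is_aut a -> forall h, j a (i h) = i (a h).
Proof.
  intros Jaut Jmul Jconj Z a Aa h.
  destruct (Jaut a Aa) as [Hja [_ Sja]].
  assert (a_conj : (fun x => conj (a h) (a x)) = (fun x => a (conj h x))).
  { extensionality x; symmetry; apply (hom_conj (proj1 Aa)). }
  assert (E : (fun y => conj (i (a h)) (j a y)) = (fun y => j a (conj (i h) y))).
  { rewrite <- (Jconj (a h)), <- (Jconj h), <- (Jmul _ _ (conj_aut H (a h)) Aa),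
      <- (Jmul _ _ Aa (conj_aut H h)), a_conj; reflexivity. }
  apply conj_inj_of_center_trivial; [exact Z |]; intro y.
  destruct (Sja y) as [x <-]; rewrite <- (hom_conj Hja).
  exact (eq_sym (equal_f E x)).
Qed.

Lemma ext_of_aut_embedding (phi : H -> G) :
  aut_embedding i -> iso_subgroups_conjugate i -> (forall z : G, center z -> z = gone) ->
  is_hom phi -> injective phi ->
  exists psi : G -> G, is_hom psi /\ forall h, psi (i h) = phi h.
Proof.
  intros [j [Jaut [Jmul [_ Jconj]]]] C2 Z Hphi Iphi.
  destruct (C2 (range phi) (range_subgroup H G phi Hphi)) as [beta [Abeta Ebeta]].
  { exists phi; split; [| split]; [exact Hphi | exact Iphi | reflexivity]. }
  destruct (aut_transport phi beta Hphi Iphi Abeta Ebeta) as [a [Aa Ea]].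
  destruct (aut_inv G beta Abeta) as [beta' [[Hbeta' _] [betaK _]]].
  exists (fun y => beta' (j a y)); split.
  - apply hom_comp; [apply Jaut, Aa | exact Hbeta'].
  - intro h; rewrite (aut_embedding_intertwines j Jaut Jmul Jconj Z a Aa), Ea, betaK; reflexivity.
Qed.

Lemma ext_exists (phi : H -> G) :
  aut_embedding i -> iso_subgroups_conjugate i -> is_hom phi ->
  exists psi : G -> G, is_hom psi /\ forall h, psi (i h) = phi h.
Proof.
  intros C1 C2 Hphi.
  destruct (simple_hom_inj_or_trivial H G phi Hphi simpleH) as [Iphi | Tphi].
  - destruct (proj2 simpleG _ (center_normal G)) as [Z | Z].
    + exact (ext_of_aut_embedding phi C1 C2 Z Hphi Iphi).
    + exact (ext_of_surjective i phi i_hom i_inj (simple_abelian_surjective Z) Hphi).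
  - exists (fun _ => gone); split.
    + intros x y; rewrite gmul1x; reflexivity.
    + intro h; rewrite Tphi; reflexivity.
Qed.

Lemma localization_of_conditions :
  aut_embedding i -> iso_subgroups_conjugate i -> aut_centralizer_trivial i ->
  localization i.
Proof.
  intros C1 C2 C3 phi Hphi.
  destruct (ext_exists phi C1 C2 Hphi) as [psi [Hpsi Epsi]].
  exists psi; split; [exact Hpsi | split; [exact Epsi |]].
  intros psi' Hpsi' Epsi'.
  exact (ext_unique_of_aut_centralizer_trivial phi psi' psi C3 Hphi Hpsi' Hpsi Epsi' Epsi).
Qed.

End Localization.

Theorem theorem2p3 (H G : group) (i : H -> G)
  (i_hom : is_hom i) (i_inj : injective i)
  (simpleH : simple H) (simpleG : simple G) (coG : cohopfian G) :
  localization i <->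
  ( (exists j : (H -> H) -> (G -> G),
       (forall a, is_aut a -> is_aut (j a)) /\
       (forall a b, is_aut a -> is_aut b ->
          j (fun x => a (b x)) = (fun y => j a (j b y))) /\
       (forall a b, is_aut a -> is_aut b -> j a = j b -> a = b) /\
       (forall h : H, j (conj h) = conj (i h)))
    /\
    (forall K : G -> Prop, is_subgroup K ->
       (exists f : H -> G, is_hom f /\ injective f /\ (forall y, K y <-> range f y)) ->
       exists beta : G -> G, is_aut beta /\
         (forall y, image_pred beta K y <-> range i y))
    /\
    (forall beta : G -> G, is_aut beta -> (forall h, beta (i h) = i h) ->
       forall x, beta x = x) ).
Proof.
  split.
  - intro L; split; [| split].
    + apply localization_aut_embedding; assumption.
    + apply localization_iso_subgroups_conjugate; assumption.
    + apply (localization_aut_centralizer_trivial H G i); assumption.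
  - intros [C1 [C2 C3]]; apply localization_of_conditions; assumption.
Qed.
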